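(* Let $n\ge1$, $\delta>0$, and $\hat r\in\mathbb R^n$ with $\hat r_1\ge\hat r_2\ge\cdots\ge\hat r_n$. Let $t_0$ be the unique solution of $\sum_{i=1}^n(\hat r_i-t)_+=\delta$, and define $$t^\star:=\inf\Big\{t\ge t_0:\ \sum_{i:\hat r_i>t}(\hat r_1-\hat r_i)\le\delta\Big\}.$$ Then the vector $\pi^\star\in\mathbb R^n$ given by $$\pi_i^\star=\frac{(\hat r_i-t^\star)_+}{\delta}\ (i=2,\dots,n),\qquad \pi_1^\star=1-\frac1\delta\sum_{i=2}^n(\hat r_i-t^\star)_+$$ belongs to $\Delta_n$ and is an optimal solution of $$\min_{\pi\in\Delta_n}\ \max_{\|\Delta\|_1\le\delta}\mathrm{Reg}(\pi,\hat r+\Delta).$$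
   Context: $\Delta_n:=\{q\in\mathbb R^n_+:\sum_iq_i=1\}$; $(a)_+:=\max\{a,0\}$. For $\pi\in\Delta_n$ and $s\in\mathbb R^n$, $\mathrm{Reg}(\pi,s):=\max_{\beta\in\Delta_n}\langle\beta-\pi,s\rangle$. *)

From HB Require Import structures.
From mathcomp Require Import all_boot all_order all_algebra.
From mathcomp Require Import all_classical all_reals.
From mathcomp Require Import ereal.
Unset Printing Implicit Defensive.
Import Order.TTheory GRing.Theory Num.Theory.
Local Open Scope classical_set_scope.
Local Open Scope ring_scope.

Definition pospart {R : realType} (a : R) : R := Num.max a 0.

Definition simplex (R : realType) (n : nat) : set ('I_n -> R) :=
  [set q | (forall i, 0 <= q i) /\ \sum_(i < n) q i = 1].

Definition dotp {R : realType} {n : nat} (x y : 'I_n -> R) : R :=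
  \sum_(i < n) x i * y i.

Definition l1norm {R : realType} {n : nat} (x : 'I_n -> R) : R :=
  \sum_(i < n) `|x i|.

Definition Reg {R : realType} {n : nat} (pi s : 'I_n -> R) : \bar R :=
  ereal_sup [set ((dotp (fun i => beta i - pi i) s)%:E) | beta in simplex R n].

Definition worst_regret {R : realType} {n : nat} (delta : R) (rhat pi : 'I_n -> R)
  : \bar R :=
  ereal_sup [set Reg pi (fun i => rhat i + D i) | D in [set D | l1norm D <= delta]].

Definition tstar {R : realType} {n : nat} (i1 : 'I_n) (delta t0 : R)
  (rhat : 'I_n -> R) : R :=
  inf [set t | t0 <= t /\ \sum_(i < n | t < rhat i) (rhat i1 - rhat i) <= delta].

Definition pistar {R : realType} {n : nat} (i1 : 'I_n) (delta ts : R)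
  (rhat : 'I_n -> R) : 'I_n -> R :=
  fun i => if i == i1 then
             1 - delta^-1 * \sum_(j < n | j != i1) pospart (rhat j - ts)
           else pospart (rhat i - ts) / delta.

From HB Require Import structures.
From mathcomp Require Import all_boot all_order all_algebra.
From mathcomp Require Import all_classical all_reals.
From mathcomp Require Import ereal.
From mathcomp Require Import ring lra.
Import Order.TTheory GRing.Theory Num.Theory.
Local Open Scope classical_set_scope.
Local Open Scope ring_scope.

Set Implicit Arguments.
Unset Strict Implicit.

(* Against a perturbation budget delta the adversary puts all of it on one
   arm, so with w_i := rhat_1 - rhat_i the worst-case regret of pi equals
     delta - rhat_1 + max_j (rhat_j - delta pi_j) + sum_i pi_i w_i.
   If M is the max, then delta pi_i >= (rhat_i - M)_+, so pi costs at least
   the potential phi(M) := M + (1/delta) sum_i (rhat_i - M)_+ w_i, and M >= t0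
   since sum_i (rhat_i - M)_+ <= delta.  pistar attains phi(tstar), and phi,
   convex and piecewise linear with right slope
   1 - (1/delta) sum_{rhat_i > t} w_i, is minimised on [t0, oo) at tstar. *)

Section Pospart.
Variable R : realType.
Implicit Types a b : R.

Lemma pospart_cases a :
  (0 <= a /\ pospart a = a) \/ (a < 0 /\ pospart a = 0).
Proof.
rewrite /pospart; case: (lerP 0 a) => a0.
- by left; split=> //; rewrite max_l.
- by right; split=> //; rewrite max_r // ltW.
Qed.

Lemma pospart_ge0 a : 0 <= pospart a.
Proof. by case: (pospart_cases a) => -[? ->]. Qed.

Lemma pospart_le a b : a <= b -> pospart a <= pospart b.
Proof.
by case: (pospart_cases a) => -[? ->]; case: (pospart_cases b) => -[? ->]; lra.
Qed.

Lemma pospart_lt a b : a < b -> 0 < b -> pospart a < pospart b.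
Proof.
by case: (pospart_cases a) => -[? ->]; case: (pospart_cases b) => -[? ->]; lra.
Qed.

Variable n : nat.
Implicit Types r : 'I_n -> R.

Lemma sum_pospart_le r t s :
  t <= s -> \sum_(i < n) pospart (r i - s) <= \sum_(i < n) pospart (r i - t).
Proof. by move=> ts; apply: ler_sum => i _; apply: pospart_le; lra. Qed.

Lemma le_of_sum_pospart_le r t s :
  0 < \sum_(i < n) pospart (r i - t) ->
  \sum_(i < n) pospart (r i - s) <= \sum_(i < n) pospart (r i - t) -> t <= s.
Proof.
move=> sum_gt0; apply: contra_leP => /negP; rewrite -ltNge => st.
have [j tj|r_le] := pickP (fun j => t < r j); last first.
  move: sum_gt0; rewrite big1 ?ltxx // => i _.
  by have := r_le i; case: (pospart_cases (r i - t)) => -[? ->] // /negbT; rewrite -leNgt; lra.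
rewrite (bigD1 j) //= [ltRHS](bigD1 j) //=; apply: ltr_leD.
  by apply: pospart_lt; lra.
by apply: ler_sum => i _; apply: pospart_le; lra.
Qed.

End Pospart.

Section Simplex.
Variables (R : realType) (n : nat).
Implicit Types p beta r D : 'I_n -> R.

Lemma sum_indicatorM (f : 'I_n -> R) j :
  \sum_(i < n) (i == j)%:R * f i = f j.
Proof.
rewrite (bigD1 j) //= big1 => [|i /negbTE ->]; last by rewrite mul0r.
by rewrite eqxx mul1r addr0.
Qed.

Lemma simplex_le1 p j : simplex R n p -> p j <= 1.
Proof.
by move=> [p0 <-]; rewrite (bigD1 j) //= lerDl sumr_ge0.
Qed.

Lemma simplex_pair_le1 p i j : simplex R n p -> i != j -> p i + p j <= 1.
Proof.
move=> [p0 <-] ij; rewrite (bigD1 i) //= (bigD1 j) 1?eq_sym //=.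
by rewrite addrA lerDl sumr_ge0.
Qed.

Lemma dotpDr p r D : dotp p (fun i => r i + D i) = dotp p r + dotp p D.
Proof. by rewrite /dotp -big_split; apply: eq_bigr => i _; rewrite mulrDr. Qed.

Lemma dotpBl p beta r : dotp (fun i => beta i - p i) r = dotp beta r - dotp p r.
Proof. by rewrite /dotp -sumrB; apply: eq_bigr => i _; rewrite mulrBl. Qed.

Lemma dotp_gap p r c :
  \sum_(i < n) p i = 1 -> dotp p r = c - \sum_(i < n) p i * (c - r i).
Proof.
move=> p1; rewrite /dotp; under [X in _ = _ - X]eq_bigr do rewrite mulrBr.
by rewrite sumrB -mulr_suml p1 mul1r opprB addrCA subrr addr0.
Qed.

Lemma dotp_simplex_le beta r c :
  simplex R n beta -> (forall j, r j <= c) -> dotp beta r <= c.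
Proof.
move=> [b0 b1] rc; rewrite -[c]mul1r -b1 mulr_suml.
by apply: ler_sum => j _; rewrite ler_wpM2l.
Qed.

Lemma deviation_le p D d j :
  simplex R n p -> l1norm D <= d -> D j - dotp p D <= d * (1 - p j).
Proof.
move=> hp hD; have [p0 _] := hp.
have -> : D j - dotp p D = \sum_(i < n) ((i == j)%:R - p i) * D i.
  rewrite /dotp -{1}(sum_indicatorM D j) -sumrB.
  by apply: eq_bigr => i _; rewrite mulrBl.
apply: (le_trans _ (ler_wpM2r _ hD)); last by rewrite subr_ge0 simplex_le1.
rewrite /l1norm mulr_suml; apply: ler_sum => i _.
have := ler_norm (D i); rewrite -normrN; have := ler_norm (- D i).
case: (eqVneq i j) => [->|ij]; rewrite ?mulr1n ?mulr0n.
  by have := simplex_le1 j hp; nra.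
have := normr_ge0 (- D i); have := simplex_pair_le1 hp ij; have := p0 i; nra.
Qed.

Lemma regret_le p beta r D d U :
  simplex R n p -> simplex R n beta -> l1norm D <= d ->
  (forall j, r j - d * p j <= U) ->
  dotp (fun i => beta i - p i) (fun i => r i + D i) <= d + U - dotp p r.
Proof.
move=> hp hb hD hU; rewrite dotpBl.
suff : dotp beta (fun i => r i + D i) <= d + U - dotp p r + dotp p (fun i => r i + D i).
  lra.
apply: dotp_simplex_le => // j; rewrite dotpDr.
by have := deviation_le j hp hD; have := hU j; lra.
Qed.

Lemma worst_regret_le d U r p :
  simplex R n p -> (forall j, r j - d * p j <= U) ->
  (worst_regret d r p <= (d + U - dotp p r)%:E)%E.
Proof.
move=> hp hU; apply: ge_ereal_sup => _ [D hD <-].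
by apply: ge_ereal_sup => _ [beta hb <-]; rewrite lee_fin regret_le.
Qed.

Lemma worst_regret_ge d r p j :
  0 <= d -> simplex R n p ->
  ((r j - d * p j + d - dotp p r)%:E <= worst_regret d r p)%E.
Proof.
move=> d0 hp.
pose e : 'I_n -> R := fun i => (i == j)%:R.
have dotp_e f : dotp e f = f j by exact: sum_indicatorM.
pose D := fun i => d * e i.
have hD : l1norm D <= d.
  rewrite /l1norm; under eq_bigr => i _ do rewrite /D ger0_norm ?mulr_ge0 ?ler0n // mulrC.
  by rewrite -/(dotp e _) dotp_e.
have he : simplex R n e.
  split=> [i|]; first exact: ler0n.
  by under eq_bigr do rewrite -[e _]mulr1; exact: (dotp_e (fun=> 1)).
apply: le_ereal_sup_tmp; exists (Reg p (fun i => r i + D i)); first by exists D.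
apply: le_ereal_sup_tmp; eexists; first by exists e.
have dotp_pD : dotp p D = d * p j.
  by rewrite /dotp; under eq_bigr do rewrite mulrA mulrC; rewrite -/(dotp e _) dotp_e mulrC.
by rewrite lee_fin dotpBl !dotpDr dotp_pD !dotp_e /D /e eqxx mulr1; lra.
Qed.

End Simplex.

Section Hinge.
Variables (R : realType) (n : nat) (w r : 'I_n -> R).
Hypothesis w_ge0 : forall i, 0 <= w i.

Definition hinge (t : R) : R := \sum_(i < n) pospart (r i - t) * w i.

Definition tail_weight (t : R) : R := \sum_(i < n | t < r i) w i.

Lemma ler_sum_subpred (P Q : pred 'I_n) :
  (forall i, P i -> Q i) -> \sum_(i < n | P i) w i <= \sum_(i < n | Q i) w i.
Proof.
move=> PQ; rewrite [leLHS]big_mkcond [leRHS]big_mkcond /=.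
apply: ler_sum => i _; case: (boolP (P i)) => [/PQ -> //|_].
by case: (Q i).
Qed.

Lemma hinge_sub_le t s :
  t <= s -> hinge t - hinge s <= (s - t) * tail_weight t.
Proof.
move=> ts; rewrite /hinge /tail_weight -sumrB mulr_sumr [leRHS]big_mkcond /=.
apply: ler_sum => i _; have := w_ge0 i.
case: (pospart_cases (r i - t)) => -[? ->]; case: (pospart_cases (r i - s)) => -[? ->];
  case: (ltrP t (r i)) => ?; nra.
Qed.

Lemma hinge_sub_ge t s :
  t <= s -> (s - t) * \sum_(i < n | s <= r i) w i <= hinge t - hinge s.
Proof.
move=> ts; rewrite /hinge -sumrB mulr_sumr [leLHS]big_mkcond /=.
apply: ler_sum => i _; have := w_ge0 i.
case: (pospart_cases (r i - t)) => -[? ->]; case: (pospart_cases (r i - s)) => -[? ->];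
  case: (lerP s (r i)) => ?; nra.
Qed.

End Hinge.

Section Tstar.
Variables (R : realType) (n : nat) (i1 : 'I_n) (r : 'I_n -> R) (delta t0 : R).
Hypotheses (r_le : forall i, r i <= r i1) (delta_gt0 : 0 < delta).

Local Notation w := (fun i => r i1 - r i).
Local Notation ts := (tstar i1 delta t0 r).

Let w_ge0 i : 0 <= w i.
Proof. by rewrite subr_ge0. Qed.

Let S := [set t | t0 <= t /\ tail_weight w r t <= delta].

Let S_neq0 : S !=set0.
Proof.
exists (Num.max t0 (r i1)); split; first by rewrite le_max lexx.
rewrite /tail_weight big_pred0 ?ltW // => i; apply/negbTE; rewrite -leNgt.
by rewrite le_max r_le orbT.
Qed.

Let S_lbound : lbound S t0.
Proof. by move=> t []. Qed.

Lemma tstar_ge : t0 <= ts.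
Proof. exact: lb_le_inf S_neq0 S_lbound. Qed.

Lemma tail_weight_tstar_le : tail_weight w r ts <= delta.
Proof.
(* [tail_weight] is constant on [ts, c) for the next value c above ts. *)
pose c := \big[Order.min/ts + 1]_(i | ts < r i) r i.
have ts_c : ts < c by apply: lt_bigmin => //; lra.
have [s s_in s_c] := inf_lt S_neq0 ts_c.
have ts_s : ts <= s by apply: ge_inf s_in; exists t0.
apply: le_trans s_in.2; apply: (ler_sum_subpred (w := w) w_ge0) => i ts_ri.
have c_ri : c <= r i by exact: bigmin_le_cond.
lra.
Qed.

Lemma lt_tail_weight_below_tstar x :
  t0 <= x -> x < ts -> delta < tail_weight w r x.
Proof.
move=> t0_x; apply: contraTT; rewrite -!leNgt => x_feasible.
by apply: ge_inf; [exists t0 | split].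
Qed.

Lemma weight_above_tstar_ge : t0 < ts -> delta <= \sum_(i < n | ts <= r i) w i.
Proof.
move=> t0_ts; pose c := \big[Order.max/t0]_(i | r i < ts) r i.
have c_ts : c < ts by exact: bigmax_lt.
have t0_c : t0 <= c by exact: bigmax_ge_id.
apply: ltW; apply: (lt_le_trans (lt_tail_weight_below_tstar t0_c c_ts)).
apply: (ler_sum_subpred (w := w) w_ge0) => i c_ri; rewrite leNgt; apply/negP => ri_ts.
have ri_c : r i <= c by exact: le_bigmax_cond.
lra.
Qed.

Lemma tstar_minimizes s :
  t0 <= s -> ts + hinge w r ts / delta <= s + hinge w r s / delta.
Proof.
move=> t0_s; rewrite -(ler_pM2l delta_gt0) !mulrDr !(mulrCA delta) mulfV ?gt_eqF //.
rewrite !mulr1; case: (lerP ts s) => [ts_s|s_ts].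
  have := hinge_sub_le r w_ge0 ts_s; have := tail_weight_tstar_le; nra.
have := hinge_sub_ge r w_ge0 (ltW s_ts).
have := weight_above_tstar_ge (le_lt_trans t0_s s_ts); nra.
Qed.

End Tstar.

Section Pistar.
Variables (R : realType) (n : nat) (i1 : 'I_n) (r : 'I_n -> R) (delta t : R).
Hypotheses (delta_gt0 : 0 < delta)
  (sum_pospart_le : \sum_(i < n) pospart (r i - t) <= delta).

Local Notation ps := (pistar i1 delta t r).

Let delta_neq0 : delta != 0. Proof. by rewrite gt_eqF. Qed.

Let S' := \sum_(j < n | j != i1) pospart (r j - t).

Let pospart_S'_le : pospart (r i1 - t) + S' <= delta.
Proof. by move: sum_pospart_le; rewrite (bigD1 i1). Qed.

Lemma pistar_simplex : simplex R n ps.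
Proof.
split=> [i|].
  rewrite /pistar; case: eqP => _; last by rewrite divr_ge0 ?pospart_ge0 ?ltW.
  rewrite -/S' subr_ge0 ler_pdivrMl // mulr1.
  by have := pospart_ge0 (r i1 - t); have := pospart_S'_le; lra.
rewrite (bigD1 i1) //= /pistar eqxx -/S'.
have -> : \sum_(i < n | i != i1) (if i == i1 then 1 - delta^-1 * S'
    else pospart (r i - t) / delta) = S' / delta.
  by rewrite /S' mulr_suml; apply: eq_bigr => i /negbTE ->.
by rewrite [S' / delta]mulrC subrK.
Qed.

Lemma pistar_gap_le j : r j - delta * ps j <= t.
Proof.
rewrite /pistar; case: eqP => [->|_].
  rewrite -/S' mulrBr mulr1 mulrA mulfV // mul1r.
  by case: (pospart_cases (r i1 - t)) => -[? e]; have := pospart_S'_le; rewrite e; lra.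
rewrite mulrC divfK //.
by case: (pospart_cases (r j - t)) => -[? ->]; lra.
Qed.

Lemma pistar_hinge :
  \sum_(i < n) ps i * (r i1 - r i) = hinge (fun i => r i1 - r i) r t / delta.
Proof.
rewrite /hinge mulr_suml; apply: eq_bigr => i _; rewrite /pistar.
case: eqP => [->|_]; first by rewrite subrr !mulr0 mul0r.
by rewrite mulrAC.
Qed.

Lemma worst_regret_pistar_le :
  (worst_regret delta r ps <=
    (delta + t - r i1 + hinge (fun i => r i1 - r i) r t / delta)%:E)%E.
Proof.
apply: le_trans (worst_regret_le pistar_simplex pistar_gap_le) _.
by rewrite lee_fin (dotp_gap r (r i1) pistar_simplex.2) pistar_hinge; lra.
Qed.

End Pistar.

Section Competitor.
Variables (R : realType) (n : nat) (i1 j : 'I_n) (r p : 'I_n -> R) (delta M : R).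
Hypotheses (r_le : forall i, r i <= r i1) (delta_gt0 : 0 < delta)
  (p_simplex : simplex R n p) (gap_le : forall i, r i - delta * p i <= M)
  (gap_max : r j - delta * p j = M).

Let pospart_le_scaled i : pospart (r i - M) <= delta * p i.
Proof.
have := gap_le i; have := mulr_ge0 (ltW delta_gt0) (p_simplex.1 i).
by case: (pospart_cases (r i - M)) => -[? ->]; lra.
Qed.

Lemma sum_pospart_le_of_gap : \sum_(i < n) pospart (r i - M) <= delta.
Proof.
rewrite -[leRHS]mulr1 -p_simplex.2 mulr_sumr.
by apply: ler_sum => i _; exact: pospart_le_scaled.
Qed.

Lemma hinge_le_of_gap w :
  (forall i, 0 <= w i) -> hinge w r M <= delta * \sum_(i < n) p i * w i.
Proof.
move=> w_ge0; rewrite mulr_sumr; apply: ler_sum => i _.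
by rewrite mulrA ler_wpM2r.
Qed.

Lemma worst_regret_ge_hinge :
  ((delta + M - r i1 + hinge (fun i => r i1 - r i) r M / delta)%:E <=
    worst_regret delta r p)%E.
Proof.
apply: le_trans _ (worst_regret_ge r j (ltW delta_gt0) p_simplex).
rewrite lee_fin gap_max (dotp_gap r (r i1) p_simplex.2).
have w_ge0 i : 0 <= r i1 - r i by rewrite subr_ge0.
have := hinge_le_of_gap w_ge0; rewrite -ler_pdivrMl // => hinge_le; lra.
Qed.

End Competitor.

Theorem mainTheorem5 (R : realType) (n : nat) (hn : (0 < n)%N) (delta : R)
  (hdelta : 0 < delta) (rhat : 'I_n -> R)
  (hsorted : forall i j : 'I_n, (i <= j)%N -> rhat j <= rhat i)
  (t0 : R) (ht0 : \sum_(i < n) pospart (rhat i - t0) = delta) :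
  let i1 : 'I_n := Ordinal hn in
  let ts := tstar i1 delta t0 rhat in
  let ps := pistar i1 delta ts rhat in
  simplex R n ps /\
  (forall pi : 'I_n -> R, simplex R n pi ->
     (worst_regret delta rhat ps <= worst_regret delta rhat pi)%E).
Proof.
move=> i1 ts ps.
have r_le i : rhat i <= rhat i1 by apply: hsorted.
have t0_ts : t0 <= ts by exact: tstar_ge.
have sum_le : \sum_(i < n) pospart (rhat i - ts) <= delta.
  by rewrite -ht0 sum_pospart_le.
split=> [|pi pi_simplex]; first exact: pistar_simplex.
have [j _ j_max] := @arg_maxP _ _ _ i1 predT (fun j => rhat j - delta * pi j) isT.
set M := rhat j - delta * pi j in j_max.
have gap_le k : rhat k - delta * pi k <= M by exact: j_max.
have t0_M : t0 <= M.
  apply: (le_of_sum_pospart_le (r := rhat)); rewrite ht0 //.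
  exact: sum_pospart_le_of_gap gap_le.
apply: le_trans (worst_regret_pistar_le i1 hdelta sum_le) _.
apply: le_trans _ (worst_regret_ge_hinge r_le hdelta pi_simplex gap_le erefl).
by rewrite lee_fin; have := tstar_minimizes r_le hdelta t0_M; lra.
Qed.
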